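(* Fix an integer $N\ge 3$ and parameters $p_0,p_1,p_2,p_3\in(0,1)$, and set $q_m:=1-p_m$ for $m=0,1,2,3$. Let $\mu(p_0,p_1,p_2,p_3)$ denote the mean profit per turn of the cooperative Parrondo game $B$ with these parameters (defined in the context). Then $$\mu(p_0,p_1,p_2,p_3)=-\mu(q_3,q_2,q_1,q_0).$$ In particular, if $p_0+p_3=1$ and $p_1+p_2=1$, then $\mu(p_0,p_1,p_2,p_3)=0$.
   Context: Model (cooperative Parrondo game $B$): $N\ge 3$ players labeled $1,\ldots,N$ sit in a circle (indices mod $N$, so player $0$ is player $N$ and player $N+1$ is player $1$). The state space is $\Sigma=\{0,1\}^N$, where $x_i=1$ means player $i$ won his most recent game and $x_i=0$ means he lost. For $\bm x\in\Sigma$ let $m_i(\bm x):=2x_{i-1}+x_{i+1}\in\{0,1,2,3\}$ and let $\bm x^i$ be $\bm x$ with the $i$th coordinate replaced by $1-x_i$. At each turn a player $i$ is chosen uniformly at random and tosses a coin with heads probability $p_{m_i(\bm x)}$; heads means he wins one unit (and $x_i$ becomes $1$), tails means he loses one unit (and $x_i$ becomes $0$). Thus the status process is the Markov chain on $\Sigma$ with $P(\bm x,\bm x^i)=N^{-1}p_{m_i(\bm x)}$ if $x_i=0$, $P(\bm x,\bm x^i)=N^{-1}q_{m_i(\bm x)}$ if $x_i=1$, and $P(\bm x,\bm x)=N^{-1}\big(\sum_{i:x_i=0}q_{m_i(\bm x)}+\sum_{i:x_i=1}p_{m_i(\bm x)}\big)$. When all $p_m\in(0,1)$ this chain is irreducible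 and aperiodic with unique stationary distribution $\bm\pi$. The mean profit per turn is $$\mu(p_0,p_1,p_2,p_3):=\sum_{\bm x\in\Sigma}\pi(\bm x)\sum_{i=1}^N N^{-1}\big[p_{m_i(\bm x)}-q_{m_i(\bm x)}\big],$$ which equals the almost-sure limit of $S_n/n$, where $S_n$ is the cumulative profit of the ensemble of $N$ players after $n$ turns (for any initial distribution). *)

From mathcomp Require Import all_boot all_order all_algebra.
Set Implicit Arguments. Unset Strict Implicit. Unset Printing Implicit Defensive.
Import Order.TTheory GRing.Theory Num.Theory.
Local Open Scope ring_scope.

(* States of the cooperative Parrondo game B with N players:
   x : Sigma = {0,1}^N, players labelled by 'I_N (player k+1 of the paper is
   index k), x j = true  <->  x_j = 1. *)
Definition state (N : nat) := {ffun 'I_N -> bool}.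

Definition xat (N : nat) (x : state N) (k : nat) : bool :=
  [exists j : 'I_N, (nat_of_ord j == (k %% N)%N) && x j].

Definition mval (N : nat) (x : state N) (i : 'I_N) : nat :=
  (2 * xat x (i + N - 1) + xat x (i + 1))%N.

Definition coin {R : ringType} (p0 p1 p2 p3 : R) (m : nat) : R :=
  match m with 0 => p0 | 1 => p1 | 2 => p2 | _ => p3 end.

Definition flip (N : nat) (x : state N) (i : 'I_N) : state N :=
  [ffun j => if j == i then ~~ x i else x j].

Definition trans {R : fieldType} (N : nat) (p0 p1 p2 p3 : R)
    (x y : state N) : R :=
  let p i := coin p0 p1 p2 p3 (mval x i) in
  let q i := 1 - p i in
  \sum_(i < N) (if y == flip x i then (N%:R)^-1 * (if x i then q i else p i)
                else 0)
  + (if y == x then (N%:R)^-1 *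
        (\sum_(i < N | ~~ x i) q i + \sum_(i < N | x i) p i) else 0).

Definition stationary {R : numFieldType} (N : nat) (p0 p1 p2 p3 : R)
    (pi : {ffun state N -> R}) : Prop :=
  (forall x, 0 <= pi x) /\ \sum_x pi x = 1 /\
  (forall y, pi y = \sum_x pi x * trans p0 p1 p2 p3 x y).

Definition mu {R : fieldType} (N : nat) (p0 p1 p2 p3 : R)
    (pi : {ffun state N -> R}) : R :=
  \sum_x pi x * \sum_(i < N) (N%:R)^-1 *
     (coin p0 p1 p2 p3 (mval x i) - (1 - coin p0 p1 p2 p3 (mval x i))).

(* The complement map x |-> x̄ (every player's status flipped) sends m_i(x) to 3 - m_i(x)
   and hence turns the chain with parameters (p0,p1,p2,p3) into the chain with
   parameters (q3,q2,q1,q0), winning flips becoming losing flips.  The chain is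
   irreducible (any state reaches any other by single flips, each of positive
   probability), so its stationary distribution is unique; therefore the stationary
   distribution of the second game is pi composed with the complement, and the profit
   p_m - q_m of each player turns into q_m - p_m. *)
From mathcomp Require Import all_boot all_order all_algebra.
From mathcomp Require Import ring lra.
Import Order.TTheory GRing.Theory Num.Theory.
Local Open Scope ring_scope.

Section StationaryUnique.
Context {R : realFieldType} {T : finType} (P : T -> T -> R).
Hypothesis P_ge0 : forall x y, 0 <= P x y.
Hypothesis P_row : forall x, \sum_y P x y = 1.
Hypothesis P_irreducible : forall Q : T -> Prop,
  (forall x y, 0 < P x y -> Q x -> Q y) -> forall x y, Q x -> Q y.

Definition invariant_for (v : T -> R) : Prop :=
  forall y, v y = \sum_x v x * P x y.

(* [v^+ <= v^+ P] entrywise while both sides have the same total mass. *)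
Lemma invariant_pos_part (v : T -> R) : invariant_for v ->
  invariant_for (fun x => Num.max (v x) 0).
Proof.
move=> v_inv; set vp := fun x => Num.max (v x) 0.
have vp_ge0 x : 0 <= vp x by rewrite le_max lexx orbT.
have vp_sub y : vp y <= \sum_x vp x * P x y.
  rewrite {1}/vp ge_max; apply/andP; split.
    by rewrite v_inv; apply: ler_sum => x _; rewrite ler_wpM2r // le_max lexx.
  by apply: sumr_ge0 => x _; apply: mulr_ge0.
have mass : \sum_y (\sum_x vp x * P x y - vp y) = 0.
  rewrite sumrB exchange_big /=.
  under eq_bigr => x _ do rewrite -mulr_sumr P_row mulr1.
  by rewrite subrr.
move=> y; apply/eqP; rewrite eq_sym -subr_eq0; apply/eqP.
by move/psumr_eq0P: mass => -> // z _; rewrite subr_ge0.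
Qed.

Lemma invariant_support_closed (v : T -> R) x y :
  (forall z, 0 <= v z) -> invariant_for v -> 0 < P x y -> 0 < v x -> 0 < v y.
Proof.
move=> v_ge0 v_inv Pxy vx; rewrite v_inv.
apply: (lt_le_trans (mulr_gt0 vx Pxy)).
by rewrite (bigD1 x) //= lerDl; apply: sumr_ge0 => z _; apply: mulr_ge0.
Qed.

Lemma invariant_sum0_le0 (v : T -> R) : invariant_for v ->
  \sum_x v x = 0 -> forall x, v x <= 0.
Proof.
move=> v_inv v_sum x0; rewrite leNgt; apply/negP => vx0.
set vp := fun x => Num.max (v x) 0.
have vp_pos y : 0 < vp y.
  apply: (@P_irreducible (fun z => 0 < vp z) _ x0) => [x z|];
    last by rewrite lt_max vx0.
  apply: invariant_support_closed; last exact: invariant_pos_part.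
  by move=> z'; rewrite le_max lexx orbT.
have v_pos y : 0 < v y.
  by have := vp_pos y; rewrite lt_max ltxx orbF.
have : 0 < \sum_x v x.
  rewrite (bigD1 x0) //=; apply: (lt_le_trans vx0); rewrite lerDl.
  by apply: sumr_ge0 => z _; apply: ltW.
by rewrite v_sum ltxx.
Qed.

Lemma invariant_distribution_unique (pi1 pi2 : T -> R) :
  invariant_for pi1 -> \sum_x pi1 x = 1 ->
  invariant_for pi2 -> \sum_x pi2 x = 1 ->
  forall x, pi1 x = pi2 x.
Proof.
move=> inv1 sum1 inv2 sum2.
have diff_le0 (u w : T -> R) : invariant_for u -> \sum_x u x = 1 ->
    invariant_for w -> \sum_x w x = 1 -> forall x, u x - w x <= 0.
  move=> inv_u sum_u inv_w sum_w; apply: invariant_sum0_le0.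
    move=> y; rewrite inv_u inv_w -sumrB.
    by apply: eq_bigr => z _; rewrite mulrBl.
  by rewrite sumrB sum_u sum_w subrr.
move=> x; have := diff_le0 _ _ inv1 sum1 inv2 sum2 x.
have := diff_le0 _ _ inv2 sum2 inv1 sum1 x.
lra.
Qed.

End StationaryUnique.

Definition comp {N : nat} (x : state N) : state N := [ffun j => ~~ x j].

Lemma compK {N} : involutive (@comp N).
Proof. by move=> x; apply/ffunP => j; rewrite !ffunE negbK. Qed.

Lemma comp_inj {N} : injective (@comp N).
Proof. exact: inv_inj (@compK N). Qed.

Lemma flip_comp {N} (x : state N) i : flip (comp x) i = comp (flip x i).
Proof. by apply/ffunP => j; rewrite !ffunE; case: eqP => // ->; rewrite !ffunE. Qed.

Lemma xatE {N} (x : state N) k (N_gt0 : (0 < N)%N) :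
  xat x k = x (Ordinal (ltn_pmod k N_gt0)).
Proof.
apply/existsP/idP => [[j /andP[/eqP jk xj]]|xk]; last first.
  by exists (Ordinal (ltn_pmod k N_gt0)); rewrite eqxx.
by have -> : Ordinal (ltn_pmod k N_gt0) = j by apply: val_inj.
Qed.

Lemma xat_comp {N} (x : state N) k : (0 < N)%N -> xat (comp x) k = ~~ xat x k.
Proof. by move=> N_gt0; rewrite !(xatE _ _ N_gt0) ffunE. Qed.

Lemma mval_le3 {N} (x : state N) i : (mval x i <= 3)%N.
Proof. by rewrite /mval; case: (xat x _); case: (xat x _). Qed.

Lemma mval_comp {N} (x : state N) i : (0 < N)%N -> mval (comp x) i = (3 - mval x i)%N.
Proof.
by move=> N_gt0; rewrite /mval !xat_comp //; case: (xat x _); case: (xat x _).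
Qed.

Lemma coin_rev (R : nzRingType) (p0 p1 p2 p3 : R) m : (m <= 3)%N ->
  coin (1 - p3) (1 - p2) (1 - p1) (1 - p0) (3 - m) = 1 - coin p0 p1 p2 p3 m.
Proof. by case: m => [|[|[|[|]]]]. Qed.

Lemma coin_comp (R : nzRingType) N (p0 p1 p2 p3 : R) (x : state N) i :
  (0 < N)%N ->
  coin (1 - p3) (1 - p2) (1 - p1) (1 - p0) (mval (comp x) i) =
  1 - coin p0 p1 p2 p3 (mval x i).
Proof. by move=> N_gt0; rewrite mval_comp // coin_rev ?mval_le3. Qed.

Lemma trans_comp (R : fieldType) N (p0 p1 p2 p3 : R) (x y : state N) :
  (0 < N)%N ->
  trans (1 - p3) (1 - p2) (1 - p1) (1 - p0) (comp x) (comp y) =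
  trans p0 p1 p2 p3 x y.
Proof.
move=> N_gt0; rewrite /trans /= (inj_eq (@comp_inj N)); congr (_ + _).
  apply: eq_bigr => i _.
  rewrite flip_comp (inj_eq (@comp_inj N)) coin_comp // ffunE.
  by case: (x i); rewrite //= subKr.
case: (y == x) => //; rewrite addrC; congr (_ * (_ + _)).
  by apply: eq_big => i; rewrite ?ffunE // => _; rewrite coin_comp.
by apply: eq_big => i; rewrite ?ffunE ?negbK // => _; rewrite coin_comp // subKr.
Qed.

Lemma state_flip_connected {N} (Q : state N -> Prop) :
  (forall x i, Q x -> Q (flip x i)) -> forall x y, Q x -> Q y.
Proof.
move=> Q_flip x y; move: {2}#|[set i | x i != y i]| (erefl #|[set i | x i != y i]|).
move=> n; elim: n x => [|n IHn] x dist_n Qx.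
  suff -> : y = x by [].
  apply/ffunP => j; apply/eqP; rewrite eq_sym; apply/negPn/negP => xyj.
  by move: dist_n; rewrite (cardsD1 j) inE xyj.
have /card_gt0P[i xyi] : (0 < #|[set i | x i != y i]|)%N by rewrite dist_n.
apply: (IHn (flip x i)); last exact: Q_flip.
have -> : [set j | flip x i j != y j] = [set j | x j != y j] :\ i.
  apply/setP => j; rewrite !inE ffunE; case: (eqVneq j i) => [->|] //=.
  by move: xyi; rewrite inE; case: (x i); case: (y i).
by move: dist_n; rewrite (cardsD1 i) xyi => -[].
Qed.

Section GameB.
Context {R : realFieldType} {N : nat} {p0 p1 p2 p3 : R}.
Hypotheses (N_gt0 : (0 < N)%N) (p0_01 : 0 < p0 < 1) (p1_01 : 0 < p1 < 1)
  (p2_01 : 0 < p2 < 1) (p3_01 : 0 < p3 < 1).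

Let p m := coin p0 p1 p2 p3 m.

Lemma coin_gt0 m : 0 < p m.
Proof. by case: m => [|[|[|m]]]; [case/andP: p0_01|case/andP: p1_01|
  case/andP: p2_01|case/andP: p3_01]. Qed.

Lemma subr_coin_gt0 m : 0 < 1 - p m.
Proof. by rewrite subr_gt0; case: m => [|[|[|m]]]; [case/andP: p0_01|
  case/andP: p1_01|case/andP: p2_01|case/andP: p3_01]. Qed.

Lemma invN_gt0 : 0 < (N%:R : R)^-1.
Proof. by rewrite invr_gt0 ltr0n. Qed.

Lemma trans_ge0 (x y : state N) : 0 <= trans p0 p1 p2 p3 x y.
Proof.
have Ninv_ge0 := ltW invN_gt0; have p_ge0 m := ltW (coin_gt0 m).
have q_ge0 m := ltW (subr_coin_gt0 m).
rewrite /trans /=; apply: addr_ge0.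
  apply: sumr_ge0 => i _; case: eqP => // _; apply: mulr_ge0 => //.
  by case: (x i).
case: eqP => // _; apply: mulr_ge0 => //.
by apply: addr_ge0; apply: sumr_ge0.
Qed.

Lemma sum_if_eq (T : finType) (z : T) (c : R) :
  \sum_(y : T) (if y == z then c else 0) = c.
Proof. by rewrite -big_mkcond big_pred1_eq. Qed.

Lemma trans_row (x : state N) : \sum_y trans p0 p1 p2 p3 x y = 1.
Proof.
rewrite /trans /= big_split /= exchange_big /=.
under eq_bigr => i _ do rewrite sum_if_eq.
rewrite sum_if_eq -mulr_sumr -mulrDr big_mkcond [X in _ + (X + _)]big_mkcond /=.
rewrite [X in _ + (_ + X)]big_mkcond /= -!big_split /=.
rewrite (eq_bigr (fun _ => 1)); last by move=> i _; case: (x i) => /=; ring.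
by rewrite sumr_const card_ord mulVf // pnatr_eq0 -lt0n.
Qed.

Lemma trans_flip_gt0 (x : state N) i : 0 < trans p0 p1 p2 p3 x (flip x i).
Proof.
have flip_neq : (flip x i == x) = false.
  by apply/negbTE/eqP => /ffunP /(_ i); rewrite ffunE eqxx; case: (x i).
rewrite /trans /= flip_neq addr0 (bigD1 i) //= eqxx big1 ?addr0.
  by apply: mulr_gt0; [exact: invN_gt0 | case: (x i); rewrite ?coin_gt0 ?subr_coin_gt0].
move=> j ji; case: eqP => // /ffunP /(_ i); rewrite !ffunE eqxx.
by rewrite eq_sym (negbTE ji); case: (x i).
Qed.

Lemma trans_irreducible (Q : state N -> Prop) :
  (forall x y, 0 < trans p0 p1 p2 p3 x y -> Q x -> Q y) -> forall x y, Q x -> Q y.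
Proof.
by move=> Q_closed; apply: state_flip_connected => x i; apply/Q_closed/trans_flip_gt0.
Qed.

Lemma stationary_unique (pi1 pi2 : {ffun state N -> R}) :
  stationary p0 p1 p2 p3 pi1 -> stationary p0 p1 p2 p3 pi2 -> pi1 = pi2.
Proof.
move=> [_ [sum1 inv1]] [_ [sum2 inv2]]; apply/ffunP.
exact: (invariant_distribution_unique _ trans_ge0 trans_row trans_irreducible).
Qed.

Lemma stationary_comp (pi' : {ffun state N -> R}) :
  stationary (1 - p3) (1 - p2) (1 - p1) (1 - p0) pi' ->
  stationary p0 p1 p2 p3 [ffun x => pi' (comp x)].
Proof.
have comp_reindex (F : state N -> R) : \sum_x F x = \sum_x F (comp x) :> R.
  by rewrite (reindex_inj (@comp_inj N)).
move=> [pi'_ge0 [sum' inv']]; split; [|split].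
- by move=> x; rewrite ffunE.
- by rewrite -sum' [RHS]comp_reindex; apply: eq_bigr => x _; rewrite ffunE.
- move=> y; rewrite !ffunE inv' comp_reindex.
  by apply: eq_bigr => x _; rewrite ffunE trans_comp.
Qed.

Lemma mu_comp (pi' : {ffun state N -> R}) :
  mu p0 p1 p2 p3 [ffun x => pi' (comp x)] =
  - mu (1 - p3) (1 - p2) (1 - p1) (1 - p0) pi'.
Proof.
rewrite /mu [in RHS](reindex_inj (@comp_inj N)) /= -sumrN.
apply: eq_bigr => x _; rewrite ffunE -mulrN -sumrN; congr (_ * _).
by apply: eq_bigr => i _; rewrite coin_comp //; ring.
Qed.

End GameB.

Theorem corollary1 (R : realFieldType) (N : nat) (p0 p1 p2 p3 : R)
    (pi pi' : {ffun state N -> R}) :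
  (3 <= N)%N ->
  0 < p0 < 1 -> 0 < p1 < 1 -> 0 < p2 < 1 -> 0 < p3 < 1 ->
  stationary p0 p1 p2 p3 pi ->
  stationary (1 - p3) (1 - p2) (1 - p1) (1 - p0) pi' ->
  mu p0 p1 p2 p3 pi = - mu (1 - p3) (1 - p2) (1 - p1) (1 - p0) pi' /\
  (p0 + p3 = 1 -> p1 + p2 = 1 -> mu p0 p1 p2 p3 pi = 0).
Proof.
move=> N_ge3 p0_01 p1_01 p2_01 p3_01 st st'.
have N_gt0 : (0 < N)%N by apply: leq_trans N_ge3.
have mu_antisym (pi2 : {ffun state N -> R}) :
    stationary (1 - p3) (1 - p2) (1 - p1) (1 - p0) pi2 ->
    mu p0 p1 p2 p3 pi = - mu (1 - p3) (1 - p2) (1 - p1) (1 - p0) pi2.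
  move=> st2; rewrite -mu_comp //.
  by rewrite (stationary_unique N_gt0 p0_01 p1_01 p2_01 p3_01 _ _ st
    (stationary_comp N_gt0 _ st2)).
split; first exact: mu_antisym st'.
move=> p03 p12; have := mu_antisym pi.
have [-> -> -> ->] : [/\ 1 - p3 = p0, 1 - p2 = p1, 1 - p1 = p2 & 1 - p0 = p3].
  by split; lra.
by move=> /(_ st); lra.
Qed.
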